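(* There exists a constant $K>0$ such that for all $i\in\{1,\dots,6\}$ and all $(x,y)\in\mathcal D$, $$\max\big(|x_i(x,y)-z_i(x)|,\ |y_i(x,y)|\big)\le Ky .$$
   Context: Characterizing point: for any triangle (three points of the plane not all equal) there is a similitude mapping it onto a triangle with vertices $(0,0)$, $(1,0)$, $(x,y)$, $0\le x\le1/2$, $y\ge0$, sending its longest edge onto $[(0,0),(1,0)]$ and its shortest edge onto $[(0,0),(x,y)]$; $(x,y)$ is unique and is the characterizing point. $\mathcal D$ is the set of all characterizing points. For $(x,y)\in\mathcal D$ let $A=(0,0)$, $B=(x,y)$, $C=(1,0)$, $D,E,F$ the midpoints of $[A,B],[B,C],[C,A]$ and $G$ the barycenter of $ABC$; set $\mathcal T_1=\{A,D,G\}$, $\mathcal T_2=\{D,B,G\}$, $\mathcal T_3=\{B,E,G\}$, $\mathcal T_4=\{E,C,G\}$, $\mathcal T_5=\{C,F,G\}$, $\mathcal T_6=\{F,A,G\}$, and let $(x_i(x,y),y_i(x,y))$ be the characterizing point of $\mathcal T_i$. Define $z_i(x)=x_i(x,0)$ for $x\in[0,1/2]$. *)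

From Stdlib Require Import Reals Lra ClassicalEpsilon.
Open Scope R_scope.

Definition pt := (R * R)%type.

Definition dist (p q : pt) : R :=
  sqrt ((fst p - fst q) ^ 2 + (snd p - snd q) ^ 2).

Definition similitude (f : pt -> pt) : Prop :=
  exists k, 0 < k /\ forall p q, dist (f p) (f q) = k * dist p q.

Definition is_triangle (P Q S : pt) : Prop := ~ (P = Q /\ Q = S).

Definition is_perm3 (a b d P Q S : pt) : Prop :=
  (a = P /\ b = Q /\ d = S) \/ (a = P /\ b = S /\ d = Q) \/
  (a = Q /\ b = P /\ d = S) \/ (a = Q /\ b = S /\ d = P) \/
  (a = S /\ b = P /\ d = Q) \/ (a = S /\ b = Q /\ d = P).

Definition is_char_point (P Q S : pt) (c : pt) : Prop :=
  0 <= fst c <= 1 / 2 /\ 0 <= snd c /\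
  exists f : pt -> pt, similitude f /\
  exists a b d : pt, is_perm3 a b d P Q S /\
    f a = (0, 0) /\ f b = (1, 0) /\ f d = c /\
    dist a d <= dist a b /\ dist b d <= dist a b /\
    dist a d <= dist a b /\ dist a d <= dist b d.

(* The characterizing point (unique by the paper; chosen by epsilon). *)
Definition char_point (P Q S : pt) : pt :=
  epsilon (inhabits ((0, 0) : pt)) (is_char_point P Q S).

Definition in_D (c : pt) : Prop :=
  exists P Q S : pt, is_triangle P Q S /\ c = char_point P Q S.

Definition midpoint (p q : pt) : pt := ((fst p + fst q) / 2, (snd p + snd q) / 2).
Definition barycenter (p q s : pt) : pt :=
  ((fst p + fst q + fst s) / 3, (snd p + snd q + snd s) / 3).

Definition subtri (i : nat) (x y : R) : pt * pt * pt :=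
  let A : pt := (0, 0) in
  let B : pt := (x, y) in
  let C : pt := (1, 0) in
  let D := midpoint A B in
  let E := midpoint B C in
  let F := midpoint C A in
  let G := barycenter A B C in
  match i with
  | 1%nat => (A, D, G)
  | 2%nat => (D, B, G)
  | 3%nat => (B, E, G)
  | 4%nat => (E, C, G)
  | 5%nat => (C, F, G)
  | _ => (F, A, G)
  end.

Definition char_sub (i : nat) (x y : R) : pt :=
  match subtri i x y with (P, Q, T) => char_point P Q T end.

Definition x_i (i : nat) (x y : R) : R := fst (char_sub i x y).
Definition y_i (i : nat) (x y : R) : R := snd (char_sub i x y).
Definition z_i (i : nat) (x : R) : R := x_i i x 0.

From Pilot Require Import Defs.
From Stdlib Require Import Reals Lra Lia Psatz ClassicalEpsilon.
Open Scope R_scope.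

(* If the squared sides of a triangle are L >= M >= S, its characterizing point is
   ((L + S - M) / (2 L), |cross| / L), where cross is twice the signed area. The subtriangle
   T_i of (0,0), (x,y), (1,0) differs from that of (0,0), (x,0), (1,0) only by vertical moves of
   its vertices of size at most y, which change each squared side by at most y^2; the flat
   subtriangle has longest squared side at least 1/16, and T_i has area y/12. Hence x_i moves by
   O(y^2) and y_i = O(y). *)

Definition sqdist (p q : pt) : R := (fst p - fst q) ^ 2 + (snd p - snd q) ^ 2.

Definition cross (P Q S : pt) : R :=
  (fst Q - fst P) * (snd S - snd P) - (snd Q - snd P) * (fst S - fst P).

Definition max_sqside (P Q S : pt) : R := Rmax (Rmax (sqdist P Q) (sqdist Q S)) (sqdist P S).
Definition min_sqside (P Q S : pt) : R := Rmin (Rmin (sqdist P Q) (sqdist Q S)) (sqdist P S).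
Definition sum_sqside (P Q S : pt) : R := sqdist P Q + sqdist Q S + sqdist P S.

Lemma sqdist_ge0 p q : 0 <= sqdist p q.
Proof. unfold sqdist; pose proof (pow2_ge_0 (fst p - fst q)); pose proof (pow2_ge_0 (snd p - snd q)); lra. Qed.

Lemma sqdist_sym p q : sqdist p q = sqdist q p.
Proof. unfold sqdist; ring. Qed.

Lemma sqdist_eq0 p q : sqdist p q <= 0 -> p = q.
Proof.
  destruct p as [p1 p2], q as [q1 q2]; unfold sqdist; simpl; intro H.
  pose proof (pow2_ge_0 (p1 - q1)); pose proof (pow2_ge_0 (p2 - q2)).
  assert (p1 = q1) by nra; assert (p2 = q2) by nra; subst; reflexivity.
Qed.

Lemma dist_sq p q : Defs.dist p q ^ 2 = sqdist p q.
Proof. unfold Defs.dist; rewrite <- Rsqr_pow2; apply Rsqr_sqrt, sqdist_ge0. Qed.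

Lemma dist_le_sqdist p q r s : Defs.dist p q <= Defs.dist r s <-> sqdist p q <= sqdist r s.
Proof.
  split; intro Hle.
  - assert (0 <= Defs.dist p q) by apply sqrt_pos.
    rewrite <- !dist_sq; nra.
  - apply sqrt_le_1_alt, Hle.
Qed.

Lemma similitude_sqdist f : similitude f ->
  exists kk, 0 < kk /\ forall p q, sqdist (f p) (f q) = kk * sqdist p q.
Proof.
  intros [k [Hk Hf]]; exists (k ^ 2); split; [nra|].
  intros p q; rewrite <- !dist_sq, Hf; ring.
Qed.

(* Lagrange's identity: |u|^2 |v|^2 - (u.v)^2 = (u x v)^2, with u.v written by the law of cosines. *)
Lemma lagrange_cross a b d :
  sqdist a b * sqdist a d - ((sqdist a b + sqdist a d - sqdist b d) / 2) ^ 2 = cross a b d ^ 2.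
Proof. unfold sqdist, cross; field. Qed.

Ltac destruct_perm3 H :=
  destruct H as [[-> [-> ->]]|[[-> [-> ->]]|[[-> [-> ->]]|[[-> [-> ->]]|[[-> [-> ->]]|[-> [-> ->]]]]]]].

Lemma cross_sq_perm3 a b d P Q S : is_perm3 a b d P Q S -> cross a b d ^ 2 = cross P Q S ^ 2.
Proof. intro Hp; destruct_perm3 Hp; unfold cross; ring. Qed.

Lemma sqsides_perm3 a b d P Q S : is_perm3 a b d P Q S ->
  sqdist a d <= sqdist b d <= sqdist a b ->
  max_sqside P Q S = sqdist a b /\ min_sqside P Q S = sqdist a d /\
  sum_sqside P Q S = sqdist a b + sqdist a d + sqdist b d.
Proof.
  intros Hp Hs; unfold max_sqside, min_sqside, sum_sqside.
  pose proof (sqdist_sym P Q); pose proof (sqdist_sym P S); pose proof (sqdist_sym Q S).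
  destruct_perm3 Hp; unfold Rmax, Rmin; repeat destruct Rle_dec; repeat split; lra.
Qed.

Lemma is_char_point_sqsides P Q S c : is_char_point P Q S c ->
  fst c * max_sqside P Q S = (2 * max_sqside P Q S + 2 * min_sqside P Q S - sum_sqside P Q S) / 2 /\
  snd c ^ 2 * max_sqside P Q S ^ 2 = cross P Q S ^ 2 /\
  fst c ^ 2 + snd c ^ 2 <= 1.
Proof.
  intros [_ [_ [f [Hf [a [b [d [Hp [Ha [Hb [Hd [Hmax1 [Hmax2 [_ Hmin]]]]]]]]]]]]]].
  destruct (similitude_sqdist f Hf) as [kk [Hkk Hsim]].
  destruct c as [c1 c2]; cbn [fst snd].
  apply dist_le_sqdist in Hmax1, Hmax2, Hmin.
  destruct (sqsides_perm3 a b d P Q S Hp (conj Hmin Hmax2)) as [-> [-> ->]].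
  rewrite <- (cross_sq_perm3 a b d P Q S Hp), <- lagrange_cross.
  set (N := sqdist a b) in *; set (sad := sqdist a d) in *; set (sbd := sqdist b d) in *.
  assert (Eab : 1 = kk * N) by (unfold N; rewrite <- Hsim, Ha, Hb; unfold sqdist; cbn; ring).
  assert (Ead : c1 ^ 2 + c2 ^ 2 = kk * sad) by (unfold sad; rewrite <- Hsim, Ha, Hd; unfold sqdist; cbn; ring).
  assert (Ebd : (1 - c1) ^ 2 + c2 ^ 2 = kk * sbd) by (unfold sbd; rewrite <- Hsim, Hb, Hd; unfold sqdist; cbn; ring).
  assert (Hx : c1 * N = (N + sad - sbd) / 2).
  { assert (Hdiff : 2 * c1 - 1 = kk * (sad - sbd)) by nra.
    assert (Hscaled : (2 * c1 - 1) * N = sad - sbd).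
    { rewrite Hdiff, Rmult_assoc, (Rmult_comm _ N), <- Rmult_assoc, <- Eab; ring. }
    lra. }
  repeat split.
  - lra.
  - replace (c2 ^ 2 * N ^ 2) with ((c1 ^ 2 + c2 ^ 2) * N * N - (c1 * N) ^ 2) by ring.
    rewrite Hx; nra.
  - nra.
Qed.

(* Sends [a] to (0,0) and [b] to (1,0); [s = -1] adds a reflection in the x-axis. *)
Definition frame_map (a b : pt) (s : R) (p : pt) : pt :=
  let u := fst b - fst a in let v := snd b - snd a in
  (((fst p - fst a) * u + (snd p - snd a) * v) / sqdist a b,
   s * ((snd p - snd a) * u - (fst p - fst a) * v) / sqdist a b).

Lemma frame_map_sqdist a b s p q : 0 < sqdist a b -> s ^ 2 = 1 ->
  sqdist (frame_map a b s p) (frame_map a b s q) = / sqdist a b * sqdist p q.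
Proof.
  intros HN Hs.
  assert (Hsign : s = 1 \/ s = -1).
  { assert (Hroots : (s - 1) * (s + 1) = 0) by nra.
    apply Rmult_integral in Hroots; lra. }
  unfold frame_map, sqdist in *; cbn [fst snd] in *.
  destruct Hsign as [-> | ->]; field; lra.
Qed.

Lemma frame_map_similitude a b s : 0 < sqdist a b -> s ^ 2 = 1 -> similitude (frame_map a b s).
Proof.
  intros HN Hs; exists (sqrt (/ sqdist a b)); split.
  - apply sqrt_lt_R0, Rinv_0_lt_compat, HN.
  - intros p q; change (sqrt (sqdist (frame_map a b s p) (frame_map a b s q)) =
                        sqrt (/ sqdist a b) * sqrt (sqdist p q)).
    rewrite frame_map_sqdist by assumption.
    apply sqrt_mult; [left; apply Rinv_0_lt_compat, HN | apply sqdist_ge0].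
Qed.

Lemma pos_mul_le_half t N : 0 < N -> t * N <= N / 2 -> t <= 1 / 2.
Proof. intros HN H; apply (Rmult_le_reg_r N); lra. Qed.

Lemma pos_mul_ge0 t N : 0 < N -> 0 <= t * N -> 0 <= t.
Proof. intros HN H; apply (Rmult_le_reg_r N); lra. Qed.

Lemma is_char_point_frame_map a b d P Q S :
  is_perm3 a b d P Q S -> 0 < sqdist a b -> sqdist a d <= sqdist b d <= sqdist a b ->
  is_char_point P Q S (frame_map a b (if Rle_dec 0 (cross a b d) then 1 else -1) d).
Proof.
  intros Hp HN [Hmin Hmax].
  set (s := if Rle_dec 0 (cross a b d) then 1 else -1).
  assert (Hs : s ^ 2 = 1) by (unfold s; destruct Rle_dec; ring).
  assert (Hsc : 0 <= s * cross a b d) by (unfold s; destruct Rle_dec; lra).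
  assert (Hfst : fst (frame_map a b s d) * sqdist a b = (sqdist a b + sqdist a d - sqdist b d) / 2)
    by (unfold frame_map, sqdist in *; cbn [fst snd] in *; field; lra).
  assert (Hsnd : snd (frame_map a b s d) * sqdist a b = s * cross a b d)
    by (unfold frame_map, sqdist, cross in *; cbn [fst snd] in *; field; lra).
  pose proof (sqdist_ge0 a d).
  split; [split|split].
  - apply (pos_mul_ge0 _ (sqdist a b)); lra.
  - apply (pos_mul_le_half _ (sqdist a b)); lra.
  - apply (pos_mul_ge0 _ (sqdist a b)); lra.
  - exists (frame_map a b s); split; [apply frame_map_similitude; assumption|].
    exists a, b, d; split; [exact Hp|].
    split; [unfold frame_map, sqdist in *; cbn [fst snd] in *; f_equal; field; lra|].
    split; [unfold frame_map, sqdist in *; cbn [fst snd] in *; f_equal; field; lra|].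
    split; [reflexivity|].
    rewrite !dist_le_sqdist; repeat split; lra.
Qed.

Lemma char_point_exists P Q S : 0 < max_sqside P Q S -> exists c, is_char_point P Q S c.
Proof.
  unfold max_sqside; intro HL.
  pose proof (sqdist_sym P Q); pose proof (sqdist_sym P S); pose proof (sqdist_sym Q S).
  assert (Hsorted : forall a b d, is_perm3 a b d P Q S -> 0 < sqdist a b ->
            sqdist a d <= sqdist b d <= sqdist a b -> exists c, is_char_point P Q S c)
    by (intros; eexists; apply is_char_point_frame_map; eassumption).
  destruct (Rle_dec (sqdist P Q) (sqdist Q S)), (Rle_dec (sqdist Q S) (sqdist P S)),
    (Rle_dec (sqdist P Q) (sqdist P S));
  let try_triple a b d :=
    apply (Hsorted a b d);
    [ unfold is_perm3; intuition reflexivity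
    | unfold Rmax in HL; repeat destruct Rle_dec; lra .. ] in
  first [ try_triple P Q S | try_triple P S Q | try_triple Q P S
        | try_triple Q S P | try_triple S P Q | try_triple S Q P ].
Qed.

Lemma char_point_spec P Q S : 0 < max_sqside P Q S -> is_char_point P Q S (char_point P Q S).
Proof. intro HL; unfold char_point; apply epsilon_spec, char_point_exists, HL. Qed.

Lemma max_sqside_pos P Q S : is_triangle P Q S -> 0 < max_sqside P Q S.
Proof.
  intro Ht; destruct (Rlt_dec 0 (max_sqside P Q S)) as [|Hle]; [assumption|].
  exfalso; apply Ht; unfold max_sqside, Rmax in Hle.
  split; apply sqdist_eq0; repeat destruct Rle_dec; lra.
Qed.

Lemma char_point_fst P Q S : 0 < max_sqside P Q S ->
  fst (char_point P Q S) =
  1 + min_sqside P Q S / max_sqside P Q S - sum_sqside P Q S / max_sqside P Q S / 2.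
Proof.
  intro HL; destruct (is_char_point_sqsides _ _ _ _ (char_point_spec P Q S HL)) as [Hx _].
  apply (Rmult_eq_reg_r (max_sqside P Q S)); [rewrite Hx; field|]; lra.
Qed.

Lemma char_point_snd P Q S : 0 < max_sqside P Q S ->
  snd (char_point P Q S) = Rabs (cross P Q S) / max_sqside P Q S.
Proof.
  intro HL; pose proof (char_point_spec P Q S HL) as Hc.
  destruct (is_char_point_sqsides _ _ _ _ Hc) as [_ [Hy _]].
  destruct Hc as [_ [Hy0 _]].
  apply (Rmult_eq_reg_r (max_sqside P Q S)); [|lra].
  unfold Rdiv; rewrite Rmult_assoc, Rinv_l, Rmult_1_r by lra.
  rewrite <- (Rabs_pos_eq (snd _ * _)) by nra.
  rewrite <- !Rsqr_pow2 in Hy; rewrite <- Rsqr_mult in Hy.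
  apply Rsqr_eq_abs_0 in Hy; exact Hy.
Qed.

Lemma in_D_bounds x y : in_D (x, y) -> 0 <= x <= 1 / 2 /\ 0 <= y <= 1.
Proof.
  intros [P [Q [S [Ht Hc]]]].
  pose proof (char_point_spec P Q S (max_sqside_pos P Q S Ht)) as Hs; rewrite <- Hc in Hs.
  destruct (is_char_point_sqsides _ _ _ _ Hs) as [_ [_ Hdisk]].
  destruct Hs as [Hx [Hy _]]; cbn [fst snd] in *; nra.
Qed.

Definition vertical_perturbation (h : R) (P Q T P0 Q0 T0 : pt) : Prop :=
  fst P = fst P0 /\ fst Q = fst Q0 /\ fst T = fst T0 /\
  snd P0 = 0 /\ snd Q0 = 0 /\ snd T0 = 0 /\
  (snd P - snd Q) ^ 2 <= h /\ (snd Q - snd T) ^ 2 <= h /\ (snd P - snd T) ^ 2 <= h.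

Lemma sqsides_vertical_perturbation h P Q T P0 Q0 T0 :
  vertical_perturbation h P Q T P0 Q0 T0 ->
  max_sqside P0 Q0 T0 <= max_sqside P Q T <= max_sqside P0 Q0 T0 + h /\
  min_sqside P0 Q0 T0 <= min_sqside P Q T <= min_sqside P0 Q0 T0 + h /\
  sum_sqside P0 Q0 T0 <= sum_sqside P Q T <= sum_sqside P0 Q0 T0 + 3 * h.
Proof.
  intros [E1 [E2 [E3 [Z1 [Z2 [Z3 [H1 [H2 H3]]]]]]]].
  assert (D1 : sqdist P Q = sqdist P0 Q0 + (snd P - snd Q) ^ 2)
    by (unfold sqdist; rewrite E1, E2, Z1, Z2; ring).
  assert (D2 : sqdist Q T = sqdist Q0 T0 + (snd Q - snd T) ^ 2)
    by (unfold sqdist; rewrite E2, E3, Z2, Z3; ring).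
  assert (D3 : sqdist P T = sqdist P0 T0 + (snd P - snd T) ^ 2)
    by (unfold sqdist; rewrite E1, E3, Z1, Z3; ring).
  pose proof (pow2_ge_0 (snd P - snd Q)); pose proof (pow2_ge_0 (snd Q - snd T));
  pose proof (pow2_ge_0 (snd P - snd T)).
  unfold max_sqside, min_sqside, sum_sqside; rewrite D1, D2, D3.
  unfold Rmax, Rmin; repeat destruct Rle_dec; repeat split; lra.
Qed.

Lemma Rabs_div_perturbation L L' a a' e f n :
  0 < L -> L <= L' <= L + e -> 0 <= a <= n * L -> a <= a' <= a + f ->
  Rabs (a' / L' - a / L) <= (f + n * e) / L.
Proof.
  intros HL [HL1 HL2] [Ha1 Ha2] [Ha'1 Ha'2].
  set (D := a' / L' - a / L).
  assert (HD : D * L' * L = a' * L - a * L') by (unfold D; field; lra).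
  assert (Hup : D * L' <= f) by (apply (Rmult_le_reg_r L); nra).
  assert (Hlow : - (n * e) <= D * L').
  { apply (Rmult_le_reg_r L); [lra|]; rewrite HD.
    pose proof (Rmult_le_pos a (L + e - L') Ha1 ltac:(lra)).
    pose proof (Rmult_le_pos (n * L - a) e ltac:(lra) ltac:(lra)).
    nra. }
  assert (Hne : 0 <= n * e) by (apply Rmult_le_pos; nra).
  apply (Rmult_le_reg_r L); [lra|].
  replace ((f + n * e) / L * L) with (f + n * e) by (field; lra).
  destruct (Rle_dec 0 D) as [HD0 | HD0]; [rewrite Rabs_pos_eq by lra | rewrite Rabs_left by lra].
  - pose proof (Rmult_le_compat_l D L L' HD0 HL1); lra.
  - pose proof (Rmult_le_compat_l (- D) L L' ltac:(lra) HL1); lra.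
Qed.

Lemma char_point_fst_perturbation h P Q T P0 Q0 T0 :
  vertical_perturbation h P Q T P0 Q0 T0 -> 0 < max_sqside P0 Q0 T0 ->
  Rabs (fst (char_point P Q T) - fst (char_point P0 Q0 T0)) <= 5 * h / max_sqside P0 Q0 T0.
Proof.
  intros Hv HL.
  assert (Hh : 0 <= h)
    by (destruct Hv as [_ [_ [_ [_ [_ [_ [Hh _]]]]]]]; pose proof (pow2_ge_0 (snd P - snd Q)); lra).
  destruct (sqsides_vertical_perturbation _ _ _ _ _ _ _ Hv) as [Hmax [Hmin Hsum]].
  rewrite !char_point_fst by lra.
  set (L := max_sqside P0 Q0 T0) in *.
  assert (Hmin0 : 0 <= min_sqside P0 Q0 T0 <= 1 * L).
  { unfold L, min_sqside, max_sqside; pose proof (sqdist_ge0 P0 Q0);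
    pose proof (sqdist_ge0 Q0 T0); pose proof (sqdist_ge0 P0 T0);
    unfold Rmax, Rmin; repeat destruct Rle_dec; lra. }
  assert (Hsum0 : 0 <= sum_sqside P0 Q0 T0 <= 3 * L).
  { unfold L, sum_sqside, max_sqside; pose proof (sqdist_ge0 P0 Q0);
    pose proof (sqdist_ge0 Q0 T0); pose proof (sqdist_ge0 P0 T0);
    unfold Rmax; repeat destruct Rle_dec; lra. }
  pose proof (Rabs_div_perturbation L (max_sqside P Q T) _ _ h h 1 HL Hmax Hmin0 Hmin).
  pose proof (Rabs_div_perturbation L (max_sqside P Q T) _ _ h (3 * h) 3 HL Hmax Hsum0 Hsum).
  set (dmin := min_sqside P Q T / max_sqside P Q T - min_sqside P0 Q0 T0 / L) in *.
  set (dsum := sum_sqside P Q T / max_sqside P Q T - sum_sqside P0 Q0 T0 / L) in *.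
  replace (1 + min_sqside P Q T / max_sqside P Q T - sum_sqside P Q T / max_sqside P Q T / 2 -
           (1 + min_sqside P0 Q0 T0 / L - sum_sqside P0 Q0 T0 / L / 2))
    with (dmin + (- / 2) * dsum) by (unfold dmin, dsum; field; lra).
  eapply Rle_trans; [apply Rabs_triang|].
  rewrite Rabs_mult, (Rabs_left (- / 2)) by lra.
  replace (5 * h / L) with ((h + 1 * h) / L + / 2 * ((3 * h + 3 * h) / L)) by (field; lra).
  lra.
Qed.

Lemma char_point_vertical_perturbation y P Q T P0 Q0 T0 :
  0 <= y <= 1 -> vertical_perturbation (y ^ 2) P Q T P0 Q0 T0 ->
  1 / 16 <= max_sqside P0 Q0 T0 -> Rabs (cross P Q T) <= y / 6 ->
  Rmax (Rabs (fst (char_point P Q T) - fst (char_point P0 Q0 T0)))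
       (Rabs (snd (char_point P Q T))) <= 80 * y.
Proof.
  intros Hy Hv HL0 Hcross.
  pose proof (char_point_fst_perturbation _ _ _ _ _ _ _ Hv ltac:(lra)) as Hx.
  destruct (sqsides_vertical_perturbation _ _ _ _ _ _ _ Hv) as [[HL _] _].
  apply Rmax_lub.
  - eapply Rle_trans; [exact Hx|].
    apply (Rmult_le_reg_r (max_sqside P0 Q0 T0)); [lra|].
    unfold Rdiv; rewrite Rmult_assoc, Rinv_l by lra; nra.
  - rewrite char_point_snd by lra.
    rewrite Rabs_pos_eq by (apply Rle_mult_inv_pos; [apply Rabs_pos | lra]).
    apply (Rmult_le_reg_r (max_sqside P Q T)); [lra|].
    unfold Rdiv; rewrite Rmult_assoc, Rinv_l by lra; nra.
Qed.

(* The vertices of [subtri i x y] have ordinates among 0, y/3, y/2 and y. *)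
Lemma subtri_vertical_perturbation i x y :
  (1 <= i <= 6)%nat -> 0 <= x <= 1 / 2 -> 0 <= y <= 1 ->
  let '(P, Q, T) := subtri i x y in
  let '(P0, Q0, T0) := subtri i x 0 in
  vertical_perturbation (y ^ 2) P Q T P0 Q0 T0 /\
  1 / 16 <= max_sqside P0 Q0 T0 /\ Rabs (cross P Q T) <= y / 6.
Proof.
  intros Hi Hx Hy.
  destruct i as [|[|[|[|[|[|[|i]]]]]]]; try lia; cbn [subtri];
  unfold vertical_perturbation, max_sqside, sqdist, cross, midpoint, barycenter;
  cbn [fst snd]; repeat split; try lra; try nra;
  try (unfold Rmax; repeat destruct Rle_dec; nra);
  apply Rabs_le; split; nra.
Qed.

Theorem lemma7 :
  exists K : R, 0 < K /\
    forall (i : nat), (1 <= i <= 6)%nat ->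
    forall x y : R, in_D (x, y) ->
      Rmax (Rabs (x_i i x y - z_i i x)) (Rabs (y_i i x y)) <= K * y.
Proof.
  exists 80; split; [lra|].
  intros i Hi x y HD.
  destruct (in_D_bounds x y HD) as [Hx Hy].
  pose proof (subtri_vertical_perturbation i x y Hi Hx Hy) as Hsub.
  unfold z_i, x_i, y_i, char_sub.
  destruct (subtri i x y) as [[P Q] T], (subtri i x 0) as [[P0 Q0] T0].
  destruct Hsub as [Hv [HL0 Hcross]].
  exact (char_point_vertical_perturbation y P Q T P0 Q0 T0 Hy Hv HL0 Hcross).
Qed.
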